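(* Let $(p,q),(r,s)\in\mathbb{Z}^2$ be such that the integers $A=p^2+q^2$ and $B=r^2+s^2$ are relatively prime, and let $\varphi$ be a rotation of $\mathbb{R}^2$ about the origin. Then $\varphi(p,q)\in\mathbb{Z}^2$ and $\varphi(r,s)\in\mathbb{Z}^2$ if and only if $\varphi$ is a rotation by an integer multiple of $\pi/2$. *)

From Stdlib Require Export Reals ZArith.
Open Scope R_scope.

(* The rotation of R^2 about the origin by angle theta (every rotation of
   R^2 about the origin is of this form). *)
Definition rot (theta : R) (v : R * R) : R * R :=
  (fst v * cos theta - snd v * sin theta, fst v * sin theta + snd v * cos theta).

Definition in_Z2 (v : R * R) : Prop :=
  exists a b : Z, v = (IZR a, IZR b).

(* If an integer vector v with squared norm A is rotated by theta onto an
   integer vector w, then A cos theta = <v, w> and A sin theta = det(v, w) are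
   integers.  Doing this for two vectors of coprime squared norms and taking a
   Bezout combination shows that cos theta and sin theta are themselves
   integers, so one of them vanishes and theta is a multiple of PI/2.
   Conversely such rotations have integer matrices and preserve Z^2. *)
From Stdlib Require Import Reals ZArith Lra Lia.
Open Scope R_scope.

Definition is_IZR (x : R) : Prop := exists z : Z, x = IZR z.

Lemma is_IZR_IZR (z : Z) : is_IZR (IZR z).
Proof. now exists z. Qed.

Lemma is_IZR_add (x y : R) : is_IZR x -> is_IZR y -> is_IZR (x + y).
Proof. intros [a ->] [b ->]. exists (a + b)%Z. now rewrite plus_IZR. Qed.

Lemma is_IZR_mul (x y : R) : is_IZR x -> is_IZR y -> is_IZR (x * y).
Proof. intros [a ->] [b ->]. exists (a * b)%Z. now rewrite mult_IZR. Qed.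

Lemma is_IZR_opp (x : R) : is_IZR x -> is_IZR (- x).
Proof. intros [a ->]. exists (- a)%Z. now rewrite opp_IZR. Qed.

Lemma in_Z2_rot_of_is_IZR (theta : R) (p q : Z) :
  is_IZR (cos theta) -> is_IZR (sin theta) -> in_Z2 (rot theta (IZR p, IZR q)).
Proof.
  intros [c Hc] [d Hd]. unfold rot; simpl. rewrite Hc, Hd.
  exists (p * c - q * d)%Z, (p * d + q * c)%Z.
  now rewrite minus_IZR, plus_IZR, !mult_IZR.
Qed.

Lemma is_IZR_sqnorm_mul_cos_sin (theta : R) (p q : Z) :
  in_Z2 (rot theta (IZR p, IZR q)) ->
  is_IZR (IZR (p ^ 2 + q ^ 2) * cos theta) /\ is_IZR (IZR (p ^ 2 + q ^ 2) * sin theta).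
Proof.
  intros [a [b Hab]]. unfold rot in Hab; simpl in Hab.
  injection Hab as Ha Hb.
  rewrite !Z.pow_2_r, plus_IZR, !mult_IZR.
  split.
  - exists (p * a + q * b)%Z. rewrite plus_IZR, !mult_IZR, <- Ha, <- Hb. ring.
  - exists (p * b - q * a)%Z. rewrite minus_IZR, !mult_IZR, <- Ha, <- Hb. ring.
Qed.

Lemma is_IZR_of_coprime_multiples (A B : Z) (x : R) :
  Z.gcd A B = 1%Z -> is_IZR (IZR A * x) -> is_IZR (IZR B * x) -> is_IZR x.
Proof.
  intros Hg HA HB. destruct (Z.gcd_bezout _ _ _ Hg) as [u [v Huv]].
  replace x with (IZR u * (IZR A * x) + IZR v * (IZR B * x)).
  - apply is_IZR_add; apply is_IZR_mul; auto using is_IZR_IZR.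
  - rewrite <- Rmult_1_l, <- Huv, plus_IZR, !mult_IZR. ring.
Qed.

Lemma right_angle_of_is_IZR_cos_sin (theta : R) :
  is_IZR (cos theta) -> is_IZR (sin theta) -> exists k : Z, theta = IZR k * (PI / 2).
Proof.
  intros [m Hm] [n Hn].
  assert (Hmn : (m * m + n * n = 1)%Z).
  { apply eq_IZR. rewrite plus_IZR, !mult_IZR, <- Hm, <- Hn.
    pose proof (sin2_cos2 theta). unfold Rsqr in *. lra. }
  assert (Hmn0 : (m = 0 \/ n = 0)%Z) by nia.
  destruct Hmn0 as [-> | ->].
  - destruct (cos_eq_0_0 theta Hm) as [k ->].
    exists (2 * k + 1)%Z. rewrite plus_IZR, mult_IZR. field.
  - destruct (sin_eq_0_0 theta Hn) as [k ->].
    exists (2 * k)%Z. rewrite mult_IZR. field.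
Qed.

Lemma is_IZR_cos_sin_right_angle (k : Z) :
  is_IZR (cos (IZR k * (PI / 2))) /\ is_IZR (sin (IZR k * (PI / 2))).
Proof.
  induction k as [| k [Hc Hs] | k [Hc Hs]] using Z.peano_ind.
  - rewrite Rmult_0_l, cos_0, sin_0. split; apply is_IZR_IZR.
  - rewrite succ_IZR, Rmult_plus_distr_r, Rmult_1_l.
    rewrite cos_plus, sin_plus, cos_PI2, sin_PI2, !Rmult_0_r, !Rmult_1_r,
      Rminus_0_l, Rplus_0_l.
    auto using is_IZR_opp.
  - rewrite <- Z.sub_1_r, minus_IZR, Rmult_minus_distr_r, Rmult_1_l.
    rewrite cos_minus, sin_minus, cos_PI2, sin_PI2, !Rmult_0_r, !Rmult_1_r,
      Rminus_0_l, Rplus_0_l.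
    auto using is_IZR_opp.
Qed.

Theorem mainTheorem11 (p q r s : Z) (theta : R) :
  Z.gcd (p ^ 2 + q ^ 2)%Z (r ^ 2 + s ^ 2)%Z = 1%Z ->
  ((in_Z2 (rot theta (IZR p, IZR q)) /\ in_Z2 (rot theta (IZR r, IZR s)))
   <-> exists k : Z, theta = IZR k * (PI / 2)).
Proof.
  intros Hcoprime. split.
  - intros [Hpq Hrs].
    destruct (is_IZR_sqnorm_mul_cos_sin _ _ _ Hpq) as [Hc_pq Hs_pq].
    destruct (is_IZR_sqnorm_mul_cos_sin _ _ _ Hrs) as [Hc_rs Hs_rs].
    apply right_angle_of_is_IZR_cos_sin;
      eapply is_IZR_of_coprime_multiples; eassumption.
  - intros [k ->]. destruct (is_IZR_cos_sin_right_angle k) as [Hc Hs].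
    split; apply in_Z2_rot_of_is_IZR; assumption.
Qed.
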